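(* For GT systems $T_1=(\mathcal L,\mathcal R_1)$ and $T_2=(\mathcal L,\mathcal R_2)$ over a common label alphabet: $T_1\cong T_2$ implies $T_1\simeq_N T_2$, which implies $T_1\simeq_S T_2$, which implies $T_1\simeq_F T_2$. Moreover, none of the converse implications holds in general: there exist GT systems that are normalisation equivalent but not isomorphic, step-wise equivalent but not normalisation equivalent, and semantically equivalent but not step-wise equivalent.
   Context: Fix a label alphabet $\mathcal L=(\mathcal L_V,\mathcal L_E)$ of finite sets. A graph over $\mathcal L$ is $G=(V,E,s,t,l,m,p)$ with $V,E$ finite, $s,t:E\to V$ total, $l:V\rightharpoonup\mathcal L_V$ partial, $m:E\to\mathcal L_E$ total, $p:V\rightharpoonup\{0,1\}$ partial (rootedness). $G$ is a TLRG if $l,p$ are total. Morphisms preserve sources, targets, edge labels, and node labels and rootedness wherever defined; isomorphisms are bijective morphisms whose inverse is a morphism. $\mathcal G^{\oplus}(\mathcal L)$ is the set of isomorphism classes $[G]$ of TLRGs. A rule $r=\langle L\leftarrow K\rightarrow R\rangle$ consists of TLRGs $L,R$ and a graph $K$ that is a subgraph of both (sets included, $s,t,m$ restricted, $l_K\subseteq l_L$, $p_K\subseteq p_L$, likewise for $R$). Rule application to TLRG $G$ via an injective $g:L\to G$ satisfying the dangling condition (no edge outside $g(L)$ incident to a node of $g(V_L\setminus V_K)$): delete images of items of $L$ not in $K$, undefine label/rootedness of $g_V(v)$ where undefined for $v\in V_K$; add disjointly items of $R$ not in $K$, set label/rootedness of $g_V(v)$ to $l_R(v)/p_R(v)$ where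 undefined in $K$; $G\Rightarrow_r H$ if $H$ is isomorphic to the result. A GT system $T=(\mathcal L,\mathcal R)$ has a finite rule set $\mathcal R$. Rules $r_1,r_2$ are isomorphic ($r_1\cong r_2$) if there are isomorphisms $f:L_1\to L_2$, $g:R_1\to R_2$ with $f|_{K_1}=g|_{K_1}$ and $f(K_1)=K_2$. The normal form of $r$ is $r{\downarrow}=\langle L\leftarrow K'\rightarrow R\rangle$ with $K'$ having the nodes of $K$, no edges, and undefined labels and rootedness; $r_1\simeq r_2$ iff $r_1{\downarrow}\cong r_2{\downarrow}$. The induced relation $\to_T$ on $\mathcal G^{\oplus}(\mathcal L)$ is $[G]\to_T[H]$ iff $G\Rightarrow_{\mathcal R}H$. The semantic function $f_T:\mathcal G^{\oplus}(\mathcal L)\to\mathcal P(\mathcal G^{\oplus}(\mathcal L)\cup\{\bot\})$ maps $[G]$ to the set of normal forms of $[G]$ w.r.t. $\to_T$ (those $[H]$ with $[G]\to_T^*[H]$ and $[H]$ irreducible), together with $\bot$ iff there is an infinite $\to_T$-sequence starting at $[G]$. Then: $T_1\cong T_2$ iff $\mathcal R_1/{\cong}=\mathcal R_2/{\cong}$ (equal sets of isomorphism classes of rules); $T_1\simeq_N T_2$ iff $\mathcal R_1/{\simeq}=\mathcal R_2/{\simeq}$; $T_1\simeq_S T_2$ iff $\to_{T_1}=\to_{T_2}$; $T_1\simeq_F T_2$ iff $f_{T_1}=f_{T_2}$. *)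

From Stdlib Require List.
From mathcomp Require Import all_boot.

Set Implicit Arguments.
Unset Strict Implicit.
Unset Printing Implicit Defensive.

Section GT.
Variables (LV LE : finType).

(* Values of the maps outside
   gV / gE are irrelevant junk. *)
Record graph := Graph {
  gV : seq nat; gE : seq nat;
  gsrc : nat -> nat; gtgt : nat -> nat;
  glab : nat -> option LV; gelab : nat -> LE; groot : nat -> option bool }.

Definition wf (G : graph) : Prop :=
  forall e, e \in gE G -> gsrc G e \in gV G /\ gtgt G e \in gV G.

Definition TLRG (G : graph) : Prop :=
  wf G /\ forall v, v \in gV G -> glab G v <> None /\ groot G v <> None.

Definition morphism (G H : graph) (fV fE : nat -> nat) : Prop :=
  (forall v, v \in gV G -> fV v \in gV H) /\
  (forall e, e \in gE G ->
     [/\ fE e \in gE H, gsrc H (fE e) = fV (gsrc G e),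
         gtgt H (fE e) = fV (gtgt G e) & gelab H (fE e) = gelab G e]) /\
  (forall v a, v \in gV G -> glab G v = Some a -> glab H (fV v) = Some a) /\
  (forall v b, v \in gV G -> groot G v = Some b -> groot H (fV v) = Some b).

Definition iso_via (G H : graph) (fV fE : nat -> nat) : Prop :=
  morphism G H fV fE /\
  exists hV hE, morphism H G hV hE /\
    (forall v, v \in gV G -> hV (fV v) = v) /\
    (forall e, e \in gE G -> hE (fE e) = e) /\
    (forall v, v \in gV H -> fV (hV v) = v) /\
    (forall e, e \in gE H -> fE (hE e) = e).

Definition iso (G H : graph) : Prop := exists fV fE, iso_via G H fV fE.

Definition subgraph (K G : graph) : Prop :=
  {subset gV K <= gV G} /\ {subset gE K <= gE G} /\
  (forall e, e \in gE K ->
     [/\ gsrc K e = gsrc G e, gtgt K e = gtgt G e & gelab K e = gelab G e]) /\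
  (forall v a, v \in gV K -> glab K v = Some a -> glab G v = Some a) /\
  (forall v b, v \in gV K -> groot K v = Some b -> groot G v = Some b).

Record rule := Rule { rL : graph; rK : graph; rR : graph }.

Definition wf_rule (r : rule) : Prop :=
  TLRG (rL r) /\ TLRG (rR r) /\ wf (rK r) /\
  subgraph (rK r) (rL r) /\ subgraph (rK r) (rR r).

Definition rule_iso (r1 r2 : rule) : Prop :=
  exists fV fE hV hE,
    iso_via (rL r1) (rL r2) fV fE /\ iso_via (rR r1) (rR r2) hV hE /\
    (forall v, v \in gV (rK r1) -> fV v = hV v) /\
    (forall e, e \in gE (rK r1) -> fE e = hE e) /\
    (forall v, v \in gV (rK r1) -> fV v \in gV (rK r2)) /\
    (forall v', v' \in gV (rK r2) -> exists v, v \in gV (rK r1) /\ fV v = v') /\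
    (forall e, e \in gE (rK r1) -> fE e \in gE (rK r2)) /\
    (forall e', e' \in gE (rK r2) -> exists e, e \in gE (rK r1) /\ fE e = e') /\
    (forall v, v \in gV (rK r1) ->
       glab (rK r2) (fV v) = glab (rK r1) v /\ groot (rK r2) (fV v) = groot (rK r1) v).

Definition rule_nf (r : rule) : rule :=
  Rule (rL r)
       (Graph (gV (rK r)) [::] (gsrc (rK r)) (gtgt (rK r))
              (fun _ => None) (gelab (rK r)) (fun _ => None))
       (rR r).

Definition rule_weq (r1 r2 : rule) : Prop := rule_iso (rule_nf r1) (rule_nf r2).

Definition gts (T : seq rule) : Prop := forall r, List.In r T -> wf_rule r.

(* injective match satisfying the dangling condition *)
Definition is_match (G : graph) (r : rule) (mV mE : nat -> nat) : Prop :=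
  morphism (rL r) G mV mE /\
  {in gV (rL r) &, injective mV} /\ {in gE (rL r) &, injective mE} /\
  (forall e, e \in gE G -> ~ (exists x, x \in gE (rL r) /\ mE x = e) ->
     forall v, v \in gV (rL r) -> v \notin gV (rK r) ->
       gsrc G e <> mV v /\ gtgt G e <> mV v).

(* the result of applying r to G via (mV, mE): old items w of G get id 2w,
   new items x of R not in K get id 2x+1 *)
Definition result (G : graph) (r : rule) (mV mE : nat -> nat) : graph :=
  let L := rL r in let K := rK r in let R := rR r in
  let delV := fun w => has (fun v => (v \notin gV K) && (mV v == w)) (gV L) in
  let delE := fun e => has (fun x => (x \notin gE K) && (mE x == e)) (gE L) in
  let embR := fun v => if v \in gV K then (mV v).*2 else (v.*2).+1 in
  let kpre := fun w => [seq v <- gV K | mV v == w] in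
  Graph
    ([seq w.*2 | w <- gV G & ~~ delV w] ++ [seq (x.*2).+1 | x <- gV R & x \notin gV K])
    ([seq e.*2 | e <- gE G & ~~ delE e] ++ [seq (x.*2).+1 | x <- gE R & x \notin gE K])
    (fun n => if odd n then embR (gsrc R n./2) else (gsrc G n./2).*2)
    (fun n => if odd n then embR (gtgt R n./2) else (gtgt G n./2).*2)
    (fun n => if odd n then glab R n./2 else
       if kpre n./2 is v :: _ then
         (if glab K v is Some _ then glab G n./2 else glab R v)
       else glab G n./2)
    (fun n => if odd n then gelab R n./2 else gelab G n./2)
    (fun n => if odd n then groot R n./2 else
       if kpre n./2 is v :: _ then
         (if groot K v is Some _ then groot G n./2 else groot R v)
       else groot G n./2).

Definition derive (r : rule) (G H : graph) : Prop :=
  TLRG G /\ exists mV mE, is_match G r mV mE /\ iso (result G r mV mE) H.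

(* [G] ->_T [H] (on representatives; invariant under isomorphism) *)
Definition step (T : seq rule) (G H : graph) : Prop :=
  TLRG H /\ exists r, List.In r T /\ derive r G H.

Inductive reach (T : seq rule) : graph -> graph -> Prop :=
| reach_refl G H : iso G H -> reach T G H
| reach_step G G' H : step T G G' -> reach T G' H -> reach T G H.

Definition irreducible (T : seq rule) (H : graph) : Prop :=
  ~ exists H', step T H H'.

Definition normal_form_of (T : seq rule) (G H : graph) : Prop :=
  reach T G H /\ irreducible T H.

Definition infinite_from (T : seq rule) (G : graph) : Prop :=
  exists f : nat -> graph, iso (f 0) G /\ forall n, step T (f n) (f n.+1).

Definition sys_iso (T1 T2 : seq rule) : Prop :=
  (forall r1, List.In r1 T1 -> exists r2, List.In r2 T2 /\ rule_iso r1 r2) /\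
  (forall r2, List.In r2 T2 -> exists r1, List.In r1 T1 /\ rule_iso r1 r2).

Definition sys_normeq (T1 T2 : seq rule) : Prop :=
  (forall r1, List.In r1 T1 -> exists r2, List.In r2 T2 /\ rule_weq r1 r2) /\
  (forall r2, List.In r2 T2 -> exists r1, List.In r1 T1 /\ rule_weq r1 r2).

Definition sys_stepeq (T1 T2 : seq rule) : Prop :=
  forall G H, step T1 G H <-> step T2 G H.

Definition sys_semeq (T1 T2 : seq rule) : Prop :=
  forall G, TLRG G ->
    (forall H, TLRG H -> (normal_form_of T1 G H <-> normal_form_of T2 G H)) /\
    (infinite_from T1 G <-> infinite_from T2 G).

End GT.

(* A rule and its normal form derive isomorphic graphs: an interface edge is
   kept by the rule but deleted and recreated by its normal form, and where the
   interface labels a node the rule keeps the label of the host graph, which is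
   the label of the right-hand side because the match is a morphism.  If two
   rules have isomorphic normal forms, a match of one composed with the inverse
   of the isomorphism of left-hand sides is a match of the other, and the
   isomorphism of right-hand sides carries the created items of one result to
   those of the other.  Hence normalisation equivalence implies step-wise
   equivalence; the other two implications are immediate. *)

From mathcomp Require Import all_boot.

Set Implicit Arguments.
Unset Strict Implicit.
Unset Printing Implicit Defensive.

Lemma parity_ind (P : nat -> Prop) :
  (forall w, P w.*2) -> (forall w, P w.*2.+1) -> forall n, P n.
Proof.
move=> Peven Podd n; rewrite -[n]odd_double_half.
by case: (odd n); rewrite ?add1n ?add0n.
Qed.

Lemma odd_doubleS w : odd w.*2.+1.
Proof. by rewrite /= odd_double. Qed.

Lemma half_doubleS w : (w.*2.+1)./2 = w.
Proof. by rewrite /= uphalf_double. Qed.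

Section ParityTaggedSeqs.
Variables (s : seq nat) (p : pred nat) (w : nat).

Lemma double_in_evens : (w.*2 \in [seq x.*2 | x <- s & p x]) = p w && (w \in s).
Proof. by rewrite mem_map ?mem_filter //; exact: double_inj. Qed.

Lemma double_in_odds : (w.*2 \in [seq x.*2.+1 | x <- s & p x]) = false.
Proof.
by apply/mapP=> [[x _ /(congr1 odd)]]; rewrite odd_doubleS odd_double.
Qed.

Lemma doubleS_in_odds : (w.*2.+1 \in [seq x.*2.+1 | x <- s & p x]) = p w && (w \in s).
Proof. by rewrite mem_map ?mem_filter // => x y [] /double_inj. Qed.

Lemma doubleS_in_evens : (w.*2.+1 \in [seq x.*2 | x <- s & p x]) = false.
Proof.
by apply/mapP=> [[x _ /(congr1 odd)]]; rewrite odd_doubleS odd_double.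
Qed.

End ParityTaggedSeqs.

Ltac mem_parity := rewrite ?mem_cat ?double_in_evens ?double_in_odds
  ?doubleS_in_odds ?doubleS_in_evens ?orbF ?orFb ?andTb.

(** * Graph isomorphisms *)

Section Graphs.
Variables (LV LE : finType).
Implicit Types G H K : graph LV LE.

Lemma TLRG_defined G v : TLRG G -> v \in gV G ->
  exists a b, glab G v = Some a /\ groot G v = Some b.
Proof.
move=> [_ def] /def[]; case: (glab G v) => [a|] // _.
by case: (groot G v) => [b|] // _; exists a, b.
Qed.

Lemma morphism_comp G H K fV fE kV kE :
  morphism G H fV fE -> morphism H K kV kE ->
  morphism G K (kV \o fV) (kE \o fE).
Proof.
move=> [fVin [fEin [flab froot]]] [gVin [gEin [glab' groot']]].
split; first by move=> v /fVin /gVin.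
split; first by move=> e /fEin [/[dup] eH /gEin [? -> -> ->] -> -> ->].
split; first by move=> v a /[dup] vG /fVin vH /(flab _ _ vG) /(glab' _ _ vH).
by move=> v b /[dup] vG /fVin vH /(froot _ _ vG) /(groot' _ _ vH).
Qed.

Lemma iso_via_inverse G H fV fE hV hE :
  {in gV G, forall v, fV v \in gV H} -> {in gV H, forall v, hV v \in gV G} ->
  {in gV G, cancel fV hV} -> {in gV H, cancel hV fV} ->
  {in gE G, forall e, fE e \in gE H} -> {in gE H, forall e, hE e \in gE G} ->
  {in gE G, cancel fE hE} -> {in gE H, cancel hE fE} ->
  {in gE G, forall e, [/\ gsrc H (fE e) = fV (gsrc G e),
      gtgt H (fE e) = fV (gtgt G e) & gelab H (fE e) = gelab G e]} ->
  {in gE H, forall e,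
      gsrc G (hE e) = hV (gsrc H e) /\ gtgt G (hE e) = hV (gtgt H e)} ->
  {in gV G, forall v, glab H (fV v) = glab G v /\ groot H (fV v) = groot G v} ->
  iso_via G H fV fE.
Proof.
move=> fVin hVin fK hK fEin hEin fEK hEK inc inc' lab.
split.
  split=> //; split; first by move=> e /[dup] eG /inc [-> -> ->]; split=> //; exact: fEin.
  by split=> v a vG; case: (lab v vG) => lv rv; rewrite ?lv ?rv.
exists hV, hE; split=> //; split=> //; split.
  move=> e eH; have [-> ->] := inc' e eH; split=> //; first exact: hEin.
  by have [_ _ <-] := inc _ (hEin _ eH); rewrite hEK.
by split=> v a vH; case: (lab _ (hVin _ vH)); rewrite hK // => lv rv; rewrite -?lv -?rv.
Qed.

Lemma iso_refl G : iso G G.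
Proof. by exists id, id; split; [|exists id, id]; do !split. Qed.

Lemma iso_sym G H : iso G H -> iso H G.
Proof.
move=> [fV [fE [M [hV [hE [M' [fK [fEK [hK hEK]]]]]]]]].
by exists hV, hE; split=> //; exists fV, fE.
Qed.

Lemma iso_trans G H K : iso G H -> iso H K -> iso G K.
Proof.
move=> [fV [fE [M [hV [hE [M' [fK [fEK [hK hEK]]]]]]]]].
move=> [fV2 [fE2 [N [hV2 [hE2 [N' [fK2 [fEK2 [hK2 hEK2]]]]]]]]].
exists (fV2 \o fV), (fE2 \o fE); split; first exact: morphism_comp M N.
exists (hV \o hV2), (hE \o hE2); split; first exact: morphism_comp N' M'.
have [fVin [fEin _]] := M; have [hVin' [hEin' _]] := N'.
split; first by move=> v vG /=; rewrite fK2 ?fK ?fVin.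
split; first by move=> e eG /=; rewrite fEK2 ?fEK //; have [] := fEin _ eG.
split; first by move=> v vK /=; rewrite hK ?hK2 ?hVin'.
by move=> e eK /=; rewrite hEK ?hEK2 //; have [] := hEin' _ eK.
Qed.

End Graphs.

(** * A rule and its normal form *)

Section NormalForm.
Variables (LV LE : finType) (G L K R : graph LV LE) (mV mE : nat -> nat).
Hypotheses (sKL : subgraph K L) (sKR : subgraph K R) (wfK : wf K).
Hypothesis mG : is_match G (Rule L K R) mV mE.

Local Notation res := (result G (Rule L K R) mV mE).
Local Notation res_nf := (result G (rule_nf (Rule L K R)) mV mE).

Definition interface_image e := has (fun x => mE x == e) (gE K).
Definition matched_edge e := has (fun x => mE x == e) (gE L).
Definition deleted_edge e := has (fun x => (x \notin gE K) && (mE x == e)) (gE L).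

(* For an interface edge [x], the rule keeps the edge [mE x] of [G] (item
   [2 mE x]), while its normal form deletes it and creates the copy [2x+1]. *)
Definition nf_edge n :=
  if odd n then n
  else if interface_image n./2
  then (nth 0 (gE K) (find (fun x => mE x == n./2) (gE K))).*2.+1
  else n.

Definition nf_edge_inv n := if odd n && (n./2 \in gE K) then (mE n./2).*2 else n.

Lemma nf_edge_interface x : x \in gE K -> nf_edge (mE x).*2 = x.*2.+1.
Proof.
have [_ [sKLE _]] := sKL; have [_ [_ [injE _]]] := mG.
move=> xK; rewrite /nf_edge odd_double doubleK.
have hx : interface_image (mE x) by apply/hasP; exists x.
rewrite hx; set y := nth _ _ _.
have yK : y \in gE K by rewrite mem_nth // -has_find.
by have := nth_find 0 hx; rewrite -/y => /eqP /injE ->; rewrite ?sKLE.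
Qed.

Lemma nf_edge_other e : ~~ interface_image e -> nf_edge e.*2 = e.*2.
Proof. by move=> /negbTE he; rewrite /nf_edge odd_double doubleK he. Qed.

Lemma nf_edge_odd w : nf_edge w.*2.+1 = w.*2.+1.
Proof. by rewrite /nf_edge odd_doubleS. Qed.

Lemma nf_edge_inv_even w : nf_edge_inv w.*2 = w.*2.
Proof. by rewrite /nf_edge_inv odd_double. Qed.

Lemma nf_edge_inv_odd w :
  nf_edge_inv w.*2.+1 = if w \in gE K then (mE w).*2 else w.*2.+1.
Proof. by rewrite /nf_edge_inv odd_doubleS half_doubleS. Qed.

Lemma interface_edge_not_deleted x : x \in gE K -> ~~ deleted_edge (mE x).
Proof.
have [_ [sKLE _]] := sKL; have [_ [_ [injE _]]] := mG.
move=> xK; apply/hasP => [[y yL /andP [yK /eqP E]]].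
by rewrite (injE y x yL (sKLE x xK) E) xK in yK.
Qed.

Lemma kept_unmatched e :
  ~~ deleted_edge e -> ~~ interface_image e -> ~~ matched_edge e.
Proof.
move=> hd hk; apply/hasP => [[y yL E]]; case yK: (y \in gE K).
  by move/hasP: hk; apply; exists y.
by move/hasP: hd; apply; exists y => //; rewrite yK.
Qed.

Lemma unmatched_not_interface_image e : ~~ matched_edge e -> ~~ interface_image e.
Proof.
have [_ [sKLE _]] := sKL.
by move=> hi; apply/hasP => [[y /sKLE yL E]]; move/hasP: hi; apply; exists y.
Qed.

Lemma unmatched_not_deleted e : ~~ matched_edge e -> ~~ deleted_edge e.
Proof.
by move=> hi; apply/hasP => [[y yL /andP [_ E]]]; move/hasP: hi; apply; exists y.
Qed.

Lemma nf_edge_in : {in gE res, forall e, nf_edge e \in gE res_nf}.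
Proof.
have [_ [sKRE _]] := sKR.
elim/parity_ind => w; rewrite /result /=; mem_parity => /andP [].
  move=> hd wG; case hk: (interface_image w).
    move/hasP: hk => [x xK /eqP <-]; rewrite nf_edge_interface //.
    by mem_parity; rewrite sKRE.
  rewrite nf_edge_other ?hk //; mem_parity; rewrite wG andbT.
  by apply: kept_unmatched; rewrite ?hk.
by move=> xK xR; rewrite nf_edge_odd; mem_parity.
Qed.

Lemma nf_edge_inv_in : {in gE res_nf, forall e, nf_edge_inv e \in gE res}.
Proof.
have [_ [sKLE _]] := sKL; have [[_ [mEin _]] _] := mG.
elim/parity_ind => w; rewrite /result /=; mem_parity.
  move=> /andP [hi wG]; rewrite nf_edge_inv_even; mem_parity.
  by rewrite wG andbT; exact: unmatched_not_deleted.
move=> xR; rewrite nf_edge_inv_odd; case xK: (w \in gE K).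
  by mem_parity; rewrite interface_edge_not_deleted //; have [] := mEin w (sKLE w xK).
by mem_parity; rewrite xK xR.
Qed.

Lemma nf_edgeK : {in gE res, cancel nf_edge nf_edge_inv}.
Proof.
elim/parity_ind => w; rewrite /result /=; mem_parity => /andP [].
  move=> hd wG; case hk: (interface_image w).
    by move/hasP: hk => [x xK /eqP <-]; rewrite nf_edge_interface // nf_edge_inv_odd xK.
  by rewrite nf_edge_other ?hk // nf_edge_inv_even.
by move=> xK _; rewrite nf_edge_odd nf_edge_inv_odd (negbTE xK).
Qed.

Lemma nf_edge_invK : {in gE res_nf, cancel nf_edge_inv nf_edge}.
Proof.
elim/parity_ind => w; rewrite /result /=; mem_parity.
  move=> /andP [hi wG]; rewrite nf_edge_inv_even nf_edge_other //.
  exact: unmatched_not_interface_image.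
move=> xR; rewrite nf_edge_inv_odd; case xK: (w \in gE K).
  by rewrite nf_edge_interface.
by rewrite nf_edge_odd.
Qed.

Lemma interface_edge_ends x : x \in gE K ->
  [/\ gsrc R x \in gV K, gtgt R x \in gV K, gsrc G (mE x) = mV (gsrc R x),
    gtgt G (mE x) = mV (gtgt R x) & gelab G (mE x) = gelab R x].
Proof.
have [_ [sKLE [sKLe _]]] := sKL; have [_ [_ [sKRe _]]] := sKR.
have [[_ [mEin _]] _] := mG.
move=> xK; have [sK tK lK] := sKRe x xK; have [sL tL lL] := sKLe x xK.
have [_ -> -> ->] := mEin x (sKLE x xK); have [sx tx] := wfK xK.
by rewrite -sK -tK -sL -tL -lL lK.
Qed.

Lemma nf_edge_incident : {in gE res, forall e,
  [/\ gsrc res_nf (nf_edge e) = gsrc res e, gtgt res_nf (nf_edge e) = gtgt res e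
    & gelab res_nf (nf_edge e) = gelab res e]}.
Proof.
elim/parity_ind => w; rewrite /result /=; mem_parity => /andP [].
  move=> hd wG; case hk: (interface_image w).
    move/hasP: hk => [x xK /eqP <-]; rewrite nf_edge_interface //.
    rewrite odd_doubleS half_doubleS odd_double doubleK.
    by have [-> -> -> -> ->] := interface_edge_ends xK.
  by rewrite nf_edge_other ?hk.
by move=> xK xR; rewrite nf_edge_odd.
Qed.

Lemma nf_edge_inv_incident : {in gE res_nf, forall e,
  gsrc res (nf_edge_inv e) = gsrc res_nf e /\ gtgt res (nf_edge_inv e) = gtgt res_nf e}.
Proof.
elim/parity_ind => w; rewrite /result /=; mem_parity.
  by move=> _; rewrite nf_edge_inv_even.
move=> xR; rewrite nf_edge_inv_odd; case xK: (w \in gE K) => //.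
rewrite odd_double doubleK uphalf_double /= odd_double.
by have [-> -> -> -> _] := interface_edge_ends xK.
Qed.

Lemma result_nf_label : {in gV res, forall v,
  glab res_nf v = glab res v /\ groot res_nf v = groot res v}.
Proof.
have [sKLV [_ [_ [sKLl sKLr]]]] := sKL; have [_ [_ [_ [sKRl sKRr]]]] := sKR.
have [[_ [_ [mlab mroot]]] _] := mG.
elim/parity_ind => w _; rewrite /result /=; last by rewrite odd_double.
rewrite odd_double doubleK.
case E: [seq v <- gV K | mV v == w] => [|u s] //.
have : u \in u :: s by rewrite mem_head.
rewrite -E mem_filter => /andP [/eqP <- uK]; split.
  case Lu: (glab K u) => [a|] //.
  by rewrite (sKRl u a uK Lu) (mlab u a (sKLV u uK) (sKLl u a uK Lu)).
case Lu: (groot K u) => [b|] //.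
by rewrite (sKRr u b uK Lu) (mroot u b (sKLV u uK) (sKLr u b uK Lu)).
Qed.

Lemma result_nf_iso : iso res res_nf.
Proof.
exists id, nf_edge; apply: (iso_via_inverse (hV := id) (hE := nf_edge_inv)) => //.
- exact: nf_edge_in.
- exact: nf_edge_inv_in.
- exact: nf_edgeK.
- exact: nf_edge_invK.
- exact: nf_edge_incident.
- exact: nf_edge_inv_incident.
- exact: result_nf_label.
Qed.

End NormalForm.

(** * Rules with isomorphic normal forms *)

Definition odd_lift (f : nat -> nat) n := if odd n then (f n./2).*2.+1 else n.

Lemma odd_lift_even f w : odd_lift f w.*2 = w.*2.
Proof. by rewrite /odd_lift odd_double. Qed.

Lemma odd_lift_odd f w : odd_lift f w.*2.+1 = (f w).*2.+1.
Proof. by rewrite /odd_lift odd_doubleS half_doubleS. Qed.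

Section Transport.
Variables (LV LE : finType) (G L1 K1 R1 L2 K2 R2 : graph LV LE).
Hypotheses (sKL1 : subgraph K1 L1) (sKR1 : subgraph K1 R1).
Hypotheses (TR1 : TLRG R1) (TR2 : TLRG R2).
Variables (fV fE iV iE hV hE jV jE : nat -> nat).
Hypotheses (fL : morphism L1 L2 fV fE) (iL : morphism L2 L1 iV iE).
Hypotheses (fK : {in gV L1, cancel fV iV}) (fEK : {in gE L1, cancel fE iE}).
Hypotheses (iK : {in gV L2, cancel iV fV}) (iEK : {in gE L2, cancel iE fE}).
Hypotheses (hR : morphism R1 R2 hV hE) (jR : morphism R2 R1 jV jE).
Hypotheses (hK : {in gV R1, cancel hV jV}) (hEK : {in gE R1, cancel hE jE}).
Hypotheses (jK : {in gV R2, cancel jV hV}) (jEK : {in gE R2, cancel jE hE}).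
Hypothesis fh : {in gV K1, fV =1 hV}.
Hypothesis fK12 : {in gV K1, forall v, fV v \in gV K2}.
Hypothesis fK12_onto : forall y, y \in gV K2 -> exists v, v \in gV K1 /\ fV v = y.
Variables (mV mE : nat -> nat).
Hypothesis mG : is_match G (Rule L1 K1 R1) mV mE.

Local Notation res1 := (result G (rule_nf (Rule L1 K1 R1)) mV mE).
Local Notation res2 := (result G (rule_nf (Rule L2 K2 R2)) (mV \o iV) (mE \o iE)).

Lemma fV_interface v : v \in gV L1 -> (fV v \in gV K2) = (v \in gV K1).
Proof.
move=> vL; apply/idP/idP; last exact: fK12.
move=> /fK12_onto [u [uK /(congr1 iV)]].
by have [sKLV _] := sKL1; rewrite (fK vL) (fK (sKLV u uK)) => <-.
Qed.

Lemma hV_interface v : v \in gV R1 -> (hV v \in gV K2) = (v \in gV K1).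
Proof.
move=> vR; apply/idP/idP; last by move=> vK; rewrite -fh // fK12.
move=> /fK12_onto [u [uK]]; rewrite fh // => /(congr1 jV).
by have [sKRV _] := sKR1; rewrite (hK vR) (hK (sKRV u uK)) => <-.
Qed.

Lemma iV_interface y : y \in gV L2 -> (iV y \in gV K1) = (y \in gV K2).
Proof. by move=> yL; rewrite -fV_interface ?iK //; apply: iL.1. Qed.

Lemma jV_interface y : y \in gV R2 -> (jV y \in gV K1) = (y \in gV K2).
Proof. by move=> yR; rewrite -hV_interface ?jK //; apply: jR.1. Qed.

Lemma iV_hV_interface v : v \in gV K1 -> iV (hV v) = v.
Proof. by have [sKLV _] := sKL1; move=> vK; rewrite -fh // fK ?sKLV. Qed.

Lemma jV_iV_interface y : y \in gV K2 -> jV y = iV y.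
Proof.
have [sKRV _] := sKR1.
by move=> /fK12_onto [u [uK <-]]; rewrite fh // hK ?sKRV // iV_hV_interface.
Qed.

Lemma match_transport : is_match G (Rule L2 K2 R2) (mV \o iV) (mE \o iE).
Proof.
have [M [injV [injE dang]]] := mG; have [iVin [iEin _]] := iL.
split; first exact: morphism_comp iL M.
split.
  move=> u v uL vL /= /injV E.
  by rewrite -(iK uL) -(iK vL) E ?iVin.
split.
  move=> u v uL vL /= E.
  have [uL' _ _ _] := iEin _ uL; have [vL' _ _ _] := iEin _ vL.
  by rewrite -(iEK uL) -(iEK vL) (injE _ _ uL' vL' E).
move=> e eG Hn y yL yK; apply: dang => //=.
- move=> [x [xL E]]; apply: Hn; exists (fE x); have [? _ _ _] := fL.2.1 x xL.
  by rewrite /= fEK.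
- exact: iVin.
- by rewrite iV_interface ?yK.
Qed.

Lemma deleted_node_transport w :
  has (fun v => (v \notin gV K2) && (mV (iV v) == w)) (gV L2) =
  has (fun v => (v \notin gV K1) && (mV v == w)) (gV L1).
Proof.
have [iVin _] := iL; have [fVin _] := fL.
apply/hasP/hasP => [[y yL /andP [yK E]] | [v vL /andP [vK E]]].
  by exists (iV y); rewrite ?iVin // iV_interface // yK.
by exists (fV v); rewrite ?fVin // fV_interface // vK fK.
Qed.

Lemma matched_edge_transport w :
  has (fun x => mE (iE x) == w) (gE L2) = has (fun x => mE x == w) (gE L1).
Proof.
have [_ [iEin _]] := iL; have [_ [fEin _]] := fL.
apply/hasP/hasP => [[y yL E] | [v vL E]].
  by exists (iE y) => //; have [] := iEin y yL.
by exists (fE v); [have [] := fEin v vL | rewrite fEK].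
Qed.

Lemma lift_hV_in : {in gV res1, forall v, odd_lift hV v \in gV res2}.
Proof.
have [hVin _] := hR.
elim/parity_ind => w; rewrite /result /=; mem_parity => /andP [].
  by move=> hd wG; rewrite odd_lift_even; mem_parity; rewrite deleted_node_transport hd.
by move=> xK xR; rewrite odd_lift_odd; mem_parity; rewrite hV_interface // xK hVin.
Qed.

Lemma lift_jV_in : {in gV res2, forall v, odd_lift jV v \in gV res1}.
Proof.
have [jVin _] := jR.
elim/parity_ind => w; rewrite /result /=; mem_parity => /andP [].
  by move=> hd wG; rewrite odd_lift_even; mem_parity; rewrite -deleted_node_transport hd.
by move=> yK yR; rewrite odd_lift_odd; mem_parity; rewrite jV_interface // yK jVin.
Qed.

Lemma lift_hVK : {in gV res1, cancel (odd_lift hV) (odd_lift jV)}.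
Proof.
elim/parity_ind => w; rewrite /result /=; mem_parity => /andP [_ wR].
  by rewrite !odd_lift_even.
by rewrite !odd_lift_odd hK.
Qed.

Lemma lift_jVK : {in gV res2, cancel (odd_lift jV) (odd_lift hV)}.
Proof.
elim/parity_ind => w; rewrite /result /=; mem_parity => /andP [_ wR].
  by rewrite !odd_lift_even.
by rewrite !odd_lift_odd jK.
Qed.

Lemma lift_hE_in : {in gE res1, forall e, odd_lift hE e \in gE res2}.
Proof.
have [_ [hEin _]] := hR.
elim/parity_ind => w; rewrite /result /=; mem_parity.
  move=> /andP [hd wG]; rewrite odd_lift_even; mem_parity.
  by rewrite matched_edge_transport hd.
by move=> xR; rewrite odd_lift_odd; mem_parity; have [] := hEin _ xR.
Qed.

Lemma lift_jE_in : {in gE res2, forall e, odd_lift jE e \in gE res1}.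
Proof.
have [_ [jEin _]] := jR.
elim/parity_ind => w; rewrite /result /=; mem_parity.
  move=> /andP [hd wG]; rewrite odd_lift_even; mem_parity.
  by rewrite -matched_edge_transport hd.
by move=> yR; rewrite odd_lift_odd; mem_parity; have [] := jEin _ yR.
Qed.

Lemma lift_hEK : {in gE res1, cancel (odd_lift hE) (odd_lift jE)}.
Proof.
elim/parity_ind => w; rewrite /result /=; mem_parity.
  by rewrite !odd_lift_even.
by move=> wR; rewrite !odd_lift_odd hEK.
Qed.

Lemma lift_jEK : {in gE res2, cancel (odd_lift jE) (odd_lift hE)}.
Proof.
elim/parity_ind => w; rewrite /result /=; mem_parity.
  by rewrite !odd_lift_even.
by move=> wR; rewrite !odd_lift_odd jEK.
Qed.

Lemma lift_hE_incident : {in gE res1, forall e,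
  [/\ gsrc res2 (odd_lift hE e) = odd_lift hV (gsrc res1 e),
      gtgt res2 (odd_lift hE e) = odd_lift hV (gtgt res1 e)
    & gelab res2 (odd_lift hE e) = gelab res1 e]}.
Proof.
have [_ [hEin _]] := hR; have [wR1 _] := TR1.
have lift_end v : v \in gV R1 -> (if hV v \in gV K2 then ((mV \o iV) (hV v)).*2
  else (hV v).*2.+1) = odd_lift hV (if v \in gV K1 then (mV v).*2 else v.*2.+1).
  move=> vR; rewrite hV_interface //.
  by case: ifP => vK; rewrite ?odd_lift_even ?odd_lift_odd //= iV_hV_interface.
elim/parity_ind => w; rewrite /result; mem_parity.
  by rewrite odd_lift_even /= !odd_double !doubleK !odd_lift_even.
move=> wR; rewrite odd_lift_odd /= !odd_double !uphalf_double /=.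
have [_ -> -> ->] := hEin _ wR; have [sR tR] := wR1 _ wR.
by rewrite !lift_end.
Qed.

Lemma lift_jE_incident : {in gE res2, forall e,
  gsrc res1 (odd_lift jE e) = odd_lift jV (gsrc res2 e) /\
  gtgt res1 (odd_lift jE e) = odd_lift jV (gtgt res2 e)}.
Proof.
have [_ [jEin _]] := jR; have [wR2 _] := TR2.
have lift_end y : y \in gV R2 -> (if jV y \in gV K1 then (mV (jV y)).*2
  else (jV y).*2.+1) = odd_lift jV (if y \in gV K2 then (mV (iV y)).*2 else y.*2.+1).
  move=> yR; rewrite jV_interface //.
  by case: ifP => yK; rewrite ?odd_lift_even ?odd_lift_odd // jV_iV_interface.
elim/parity_ind => w; rewrite /result; mem_parity.
  by rewrite odd_lift_even /= !odd_double !doubleK !odd_lift_even.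
move=> wR; rewrite odd_lift_odd /= !odd_double !uphalf_double /=.
have [_ -> -> _] := jEin _ wR; have [sR tR] := wR2 _ wR.
by rewrite !lift_end.
Qed.

(* In the normal forms the interface is unlabelled, so both results take the
   labels of a preserved node from the right-hand sides. *)
Lemma lift_hV_label : {in gV res1, forall v,
  glab res2 (odd_lift hV v) = glab res1 v /\ groot res2 (odd_lift hV v) = groot res1 v}.
Proof.
have [sKLV _] := sKL1; have [sKRV _] := sKR1; have [_ [_ [hlab hroot]]] := hR.
have [_ [injV _]] := mG.
have hV_label x : x \in gV R1 ->
    glab R2 (hV x) = glab R1 x /\ groot R2 (hV x) = groot R1 x.
  move=> xR; have [a [b [la lb]]] := TLRG_defined TR1 xR.
  by rewrite la lb (hlab _ _ xR la) (hroot _ _ xR lb).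
elim/parity_ind => w; rewrite /result; mem_parity => /andP [_ wR].
  rewrite odd_lift_even /= !odd_double !doubleK.
  case E1: [seq v <- gV K1 | mV v == w] => [|u s1];
    case E2: [seq v <- gV K2 | mV (iV v) == w] => [|u' s2] //.
  - have : u' \in u' :: s2 by rewrite mem_head.
    rewrite -E2 mem_filter => /andP [/eqP mu /fK12_onto [u0 [u0K Eu]]].
    have : u0 \in [seq v <- gV K1 | mV v == w].
      by rewrite mem_filter -mu -Eu fK ?eqxx ?u0K ?sKLV.
    by rewrite E1.
  - have : u \in u :: s1 by rewrite mem_head.
    rewrite -E1 mem_filter => /andP [/eqP mu uK].
    have : fV u \in [seq v <- gV K2 | mV (iV v) == w].
      by rewrite mem_filter fK12 // fK ?sKLV // mu eqxx.
    by rewrite E2.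
  - have : u' \in u' :: s2 by rewrite mem_head.
    rewrite -E2 mem_filter => /andP [/eqP mu /fK12_onto [u0 [u0K Eu]]].
    have : u \in u :: s1 by rewrite mem_head.
    rewrite -E1 mem_filter => /andP [/eqP mu1 u1K].
    rewrite -Eu fK ?sKLV // in mu.
    have Eu0 : u0 = u by apply: injV; rewrite ?sKLV // mu mu1.
    by rewrite -Eu Eu0 fh //; apply: hV_label; rewrite sKRV.
by rewrite odd_lift_odd /= !odd_double !uphalf_double /=; apply: hV_label.
Qed.

Lemma result_nf_transport : iso res1 res2.
Proof.
exists (odd_lift hV), (odd_lift hE).
apply: (iso_via_inverse (hV := odd_lift jV) (hE := odd_lift jE)).
- exact: lift_hV_in.
- exact: lift_jV_in.
- exact: lift_hVK.
- exact: lift_jVK.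
- exact: lift_hE_in.
- exact: lift_jE_in.
- exact: lift_hEK.
- exact: lift_jEK.
- exact: lift_hE_incident.
- exact: lift_jE_incident.
- exact: lift_hV_label.
Qed.

End Transport.

Section Equivalences.
Variables (LV LE : finType).
Implicit Types (G H : graph LV LE) (r : rule LV LE) (T : seq (rule LV LE)).

Lemma derive_rule_nf r G H : wf_rule r -> derive r G H <-> derive (rule_nf r) G H.
Proof.
case: r => L K R [_ [_ [wfK [sKL sKR]]]].
split=> [] [TG [mV [mE [M I]]]]; split=> //; exists mV, mE; split=> //.
  exact: iso_trans (iso_sym (result_nf_iso sKL sKR wfK M)) I.
exact: iso_trans (result_nf_iso sKL sKR wfK M) I.
Qed.

Lemma derive_nf_transport r1 r2 G H : wf_rule r1 -> wf_rule r2 ->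
  rule_iso (rule_nf r1) (rule_nf r2) ->
  derive (rule_nf r1) G H -> derive (rule_nf r2) G H.
Proof.
case: r1 => L1 K1 R1; case: r2 => L2 K2 R2.
move=> [_ [TR1 [_ [sKL1 sKR1]]]] [_ [TR2 _]].
move=> [fV [fE [hV [hE [[fL [iV [iE [iL [fK [fEK [iK iEK]]]]]]]
  [[hR [jV [jE [jR [hK [hEK [jK jEK]]]]]]] [fh [_ [fK12 [fK12_onto _]]]]]]]]]].
move=> [TG [mV [mE [M I]]]]; split=> //.
have M' : is_match G (Rule L1 K1 R1) mV mE := M.
exists (mV \o iV), (mE \o iE); split.
  exact (match_transport _ sKL1 fL iL fK fEK iK iEK fK12 fK12_onto M').
apply: iso_trans (iso_sym _) I.
exact (result_nf_transport sKL1 sKR1 TR1 TR2 fL iL fK fEK iK hR jR hK hEK jK jEK fh fK12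
  fK12_onto M').
Qed.

Lemma rule_iso_sym r1 r2 :
  {subset gV (rK r1) <= gV (rL r1)} -> {subset gV (rK r1) <= gV (rR r1)} ->
  {subset gE (rK r1) <= gE (rL r1)} -> {subset gE (rK r1) <= gE (rR r1)} ->
  rule_iso r1 r2 -> rule_iso r2 r1.
Proof.
move=> sKL sKR sKLE sKRE.
move=> [fV [fE [hV [hE [[fL [iV [iE [iL [fK [fEK [iK iEK]]]]]]]
  [[hR [jV [jE [jR [hK [hEK [jK jEK]]]]]]]
   [fh [fhE [fK12 [fK12_onto [fKE12 [fKE12_onto lab]]]]]]]]]]]].
exists iV, iE, jV, jE.
split; first by split=> //; exists fV, fE.
split; first by split=> //; exists hV, hE.
split; first by move=> v /fK12_onto [u [uK <-]]; rewrite fK ?sKL // fh // hK ?sKR.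
split; first by move=> e /fKE12_onto [x [xK <-]]; rewrite fEK ?sKLE // fhE // hEK ?sKRE.
split; first by move=> v /fK12_onto [u [uK <-]]; rewrite fK ?sKL.
split; first by move=> v vK; exists (fV v); split; [exact: fK12 | rewrite fK ?sKL].
split; first by move=> e /fKE12_onto [x [xK <-]]; rewrite fEK ?sKLE.
split; first by move=> e eK; exists (fE e); split; [exact: fKE12 | rewrite fEK ?sKLE].
by move=> v /fK12_onto [u [uK <-]]; rewrite fK ?sKL //; have [-> ->] := lab u uK.
Qed.

Lemma rule_weq_sym r1 r2 : wf_rule r1 -> rule_weq r1 r2 -> rule_weq r2 r1.
Proof. by move=> [_ [_ [_ [[sKL _] [sKR _]]]]]; apply: rule_iso_sym. Qed.

Lemma rule_iso_weq r1 r2 : rule_iso r1 r2 -> rule_weq r1 r2.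
Proof.
move=> [fV [fE [hV [hE [IL [IR [fh [_ [fK12 [fK12_onto _]]]]]]]]]].
by exists fV, fE, hV, hE; do !split=> //.
Qed.

Lemma derive_weq r1 r2 G H : wf_rule r1 -> wf_rule r2 -> rule_weq r1 r2 ->
  derive r1 G H -> derive r2 G H.
Proof.
move=> W1 W2 W /(derive_rule_nf _ _ W1) /(derive_nf_transport W1 W2 W).
by move/(derive_rule_nf _ _ W2).
Qed.

Lemma reach_stepeq T1 T2 G H :
  sys_stepeq T1 T2 -> reach T1 G H -> reach T2 G H.
Proof.
move=> E; elim=> [G0 H0 I | G0 G' H0 S _ IH]; first exact: reach_refl.
by apply: reach_step IH; apply/E.
Qed.

Lemma sys_iso_normeq T1 T2 : sys_iso T1 T2 -> sys_normeq T1 T2.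
Proof.
move=> [I1 I2]; split.
  by move=> r1 /I1 [r2 [? ?]]; exists r2; split=> //; exact: rule_iso_weq.
by move=> r2 /I2 [r1 [? ?]]; exists r1; split=> //; exact: rule_iso_weq.
Qed.

Lemma sys_normeq_stepeq T1 T2 : gts T1 -> gts T2 ->
  sys_normeq T1 T2 -> sys_stepeq T1 T2.
Proof.
move=> g1 g2 [N1 N2] G H; split=> [] [TH [r [rin D]]]; split=> //.
  have [r2 [r2in W]] := N1 r rin; exists r2; split=> //.
  exact: derive_weq (g1 r rin) (g2 r2 r2in) W D.
have [r1 [r1in W]] := N2 r rin; exists r1; split=> //.
exact: derive_weq (g2 r rin) (g1 r1 r1in) (rule_weq_sym (g1 r1 r1in) W) D.
Qed.

Lemma sys_stepeq_semeq T1 T2 : sys_stepeq T1 T2 -> sys_semeq T1 T2.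
Proof.
move=> E; have E' : sys_stepeq T2 T1 by move=> G H; apply: iff_sym.
move=> G TG; split.
  move=> H TH; split=> [] [R Irr]; split.
  - exact: reach_stepeq E R.
  - by move=> [H' S]; apply: Irr; exists H'; apply/E.
  - exact: reach_stepeq E' R.
  - by move=> [H' S]; apply: Irr; exists H'; apply/E.
by split=> [] [f [I S]]; exists f; split=> // n; apply/E.
Qed.

End Equivalences.

(** * Separating examples *)

Lemma result_identity_rule (LV LE : finType) (G K : graph LV LE) mV mE :
  TLRG K -> iso (result G (Rule K K K) mV mE) G.
Proof.
move=> TK.
have keepV w : has (fun v => (v \notin gV K) && (mV v == w)) (gV K) = false.
  by apply/hasP => [[v vK /andP [/negP]]].
have keepE w : has (fun x => (x \notin gE K) && (mE x == w)) (gE K) = false.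
  by apply/hasP => [[x xK /andP [/negP]]].
exists half, half; apply: (iso_via_inverse (hV := double) (hE := double));
  rewrite /result /=.
- by elim/parity_ind => w; mem_parity; rewrite ?keepV /= ?doubleK // => /andP [/negP].
- by move=> v vG; mem_parity; rewrite keepV.
- by elim/parity_ind => w; mem_parity; rewrite ?doubleK // => /andP [/negP].
- by move=> v _; rewrite doubleK.
- by elim/parity_ind => w; mem_parity; rewrite ?keepE /= ?doubleK // => /andP [/negP].
- by move=> v vG; mem_parity; rewrite keepE.
- by elim/parity_ind => w; mem_parity; rewrite ?doubleK // => /andP [/negP].
- by move=> v _; rewrite doubleK.
- elim/parity_ind => w; mem_parity; last by case/andP=> /negP.
  by move=> _; rewrite !odd_double !doubleK.
- by move=> e _; rewrite !odd_double !doubleK.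
- elim/parity_ind => w; mem_parity; last by case/andP=> /negP.
  move=> _; rewrite odd_double !doubleK.
  case E: [seq v <- gV K | mV v == w] => [|u s] //.
  have : u \in u :: s by rewrite mem_head.
  rewrite -E mem_filter => /andP [_ uK].
  by have [a [b [-> ->]]] := TLRG_defined TK uK.
Qed.

Lemma subgraph_refl (LV LE : finType) (G : graph LV LE) : subgraph G G.
Proof. by do !split. Qed.

Lemma wf_rule_id (LV LE : finType) (G : graph LV LE) : TLRG G -> wf_rule (Rule G G G).
Proof. by move=> TG; have [wG _] := TG; do !split=> //; apply: subgraph_refl. Qed.

Lemma rule_iso_refl (LV LE : finType) (r : rule LV LE) : rule_iso r r.
Proof.
have I (G : graph LV LE) : iso_via G G id id by split; [|exists id, id]; do !split.
exists id, id, id, id; do 2 (split; first exact: I).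
by do !split=> //; move=> x xK; exists x.
Qed.

Definition empty_graph : graph unit unit :=
  Graph [::] [::] id id (fun _ => None) (fun _ => tt) (fun _ => None).
Definition node_graph : graph unit unit :=
  Graph [:: 0] [::] id id (fun _ => Some tt) (fun _ => tt) (fun _ => Some false).

Definition id_empty : rule unit unit := Rule empty_graph empty_graph empty_graph.
Definition id_node : rule unit unit := Rule node_graph node_graph node_graph.
Definition add_node : rule unit unit := Rule empty_graph empty_graph node_graph.

Lemma TLRG_empty_graph : TLRG empty_graph.
Proof. by split=> ?; rewrite in_nil. Qed.

Lemma TLRG_node_graph : TLRG node_graph.
Proof. by split=> [? | ? _]; rewrite ?in_nil. Qed.

Lemma subgraph_empty (G : graph unit unit) : subgraph empty_graph G.
Proof. by do !split=> //; move=> ?; rewrite in_nil. Qed.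

Lemma wf_add_node : wf_rule add_node.
Proof.
split; first exact: TLRG_empty_graph.
split; first exact: TLRG_node_graph.
by split; [case: TLRG_empty_graph | split; [exact: subgraph_refl | exact: subgraph_empty]].
Qed.

Lemma wf_id_node_nf : wf_rule (rule_nf id_node).
Proof.
split; first exact: TLRG_node_graph.
split; first exact: TLRG_node_graph.
by do !split=> //; move=> ?; rewrite in_nil.
Qed.

Lemma match_from_empty (G K R : graph unit unit) mV mE :
  is_match G (Rule empty_graph K R) mV mE.
Proof. by do !split=> //; move=> ?; rewrite in_nil. Qed.

Lemma step_id_empty T (G : graph unit unit) :
  List.In id_empty T -> TLRG G -> step T G G.
Proof.
move=> inT TG; split=> //; exists id_empty; split=> //; split=> //.
exists id, id; split; first exact: match_from_empty.
exact: result_identity_rule TLRG_empty_graph.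
Qed.

(* A rule isomorphism preserves the interface label that the normal form drops. *)
Lemma normeq_not_iso : exists T1 T2 : seq (rule unit unit),
  [/\ gts T1, gts T2, sys_normeq T1 T2 & ~ sys_iso T1 T2].
Proof.
exists [:: id_node], [:: rule_nf id_node]; split.
- by move=> r [<-|[]]; exact: wf_rule_id TLRG_node_graph.
- by move=> r [<-|[]]; exact: wf_id_node_nf.
- by split=> r [<-|[]]; [exists (rule_nf id_node) | exists id_node];
    split; try exact: rule_iso_refl; left.
move=> [I _]; have [r2 [[<-|[]]]] := I id_node (or_introl erefl).
move=> [fV [fE [hV [hE [_ [_ [_ [_ [_ [_ [_ [_ lab]]]]]]]]]]]].
by have [] := lab 0 (mem_head _ _).
Qed.

(* Like [id_empty], [id_node] only rewrites a graph to an isomorphic copy; but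
   its left-hand side has a node, so no rule of the first system matches it. *)
Lemma stepeq_not_normeq : exists T1 T2 : seq (rule unit unit),
  [/\ gts T1, gts T2, sys_stepeq T1 T2 & ~ sys_normeq T1 T2].
Proof.
exists [:: id_empty], [:: id_empty; id_node]; split.
- by move=> r [<-|[]]; exact: wf_rule_id TLRG_empty_graph.
- by move=> r [<-|[<-|[]]]; apply: wf_rule_id; [exact: TLRG_empty_graph | exact: TLRG_node_graph].
- move=> G H; split=> [] [TH [r [rin D]]]; split=> //; exists id_empty; split; try by left.
    by case: rin D => [<-|[]].
  case: rin D => [<- //|[<-|[]]] [TG [mV [mE [_ I]]]].
  split=> //; exists id, id; split; first exact: match_from_empty.
  apply: iso_trans (result_identity_rule _ _ _ TLRG_empty_graph) _.
  exact: iso_trans (iso_sym (result_identity_rule _ _ _ TLRG_node_graph)) I.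
move=> [_ N]; have [r1 [[<-|[]]]] := N id_node (or_intror (or_introl erefl)).
move=> [fV [fE [hV [hE [[_ [iV [iE [[iVin _] _]]]] _]]]]].
by have := iVin 0 (mem_head _ _).
Qed.

(* Every graph has an infinite [id_empty]-derivation and hence no normal form
   under either system, while [add_node] changes the empty graph. *)
Lemma semeq_not_stepeq : exists T1 T2 : seq (rule unit unit),
  [/\ gts T1, gts T2, sys_semeq T1 T2 & ~ sys_stepeq T1 T2].
Proof.
exists [:: id_empty], [:: id_empty; add_node]; split.
- by move=> r [<-|[]]; exact: wf_rule_id TLRG_empty_graph.
- by move=> r [<-|[<-|[]]]; [exact: wf_rule_id TLRG_empty_graph | exact: wf_add_node].
- move=> G TG; split.
    by move=> H TH; split=> [] [_ Irr]; exfalso; apply: Irr; exists H;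
      apply: step_id_empty => //; left.
  by split=> _; exists (fun _ => G); split=> [|n]; try exact: iso_refl;
    apply: step_id_empty => //; left.
move=> E; set H := result empty_graph add_node id id.
have TH : TLRG H.
  split; first by move=> e; rewrite /= in_nil.
  by move=> v; rewrite /= inE => /eqP ->.
have S2 : step [:: id_empty; add_node] empty_graph H.
  split=> //; exists add_node; split; first by right; left.
  split; first exact: TLRG_empty_graph.
  by exists id, id; split; [exact: match_from_empty | exact: iso_refl].
have [_ [r [[<-|[]] [_ [mV [mE [_ I]]]]]]] := (E empty_graph H).2 S2.
move: I => [fV [fE [_ [hV [hE [[hVin _] _]]]]]].
by have := hVin 1 (mem_head _ _).
Qed.

Theorem theorem3p4 :
  (forall (LV LE : finType) (T1 T2 : seq (rule LV LE)), gts T1 -> gts T2 ->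
     (sys_iso T1 T2 -> sys_normeq T1 T2) /\
     (sys_normeq T1 T2 -> sys_stepeq T1 T2) /\
     (sys_stepeq T1 T2 -> sys_semeq T1 T2)) /\
  (exists (LV LE : finType) (T1 T2 : seq (rule LV LE)),
     gts T1 /\ gts T2 /\ sys_normeq T1 T2 /\ ~ sys_iso T1 T2) /\
  (exists (LV LE : finType) (T1 T2 : seq (rule LV LE)),
     gts T1 /\ gts T2 /\ sys_stepeq T1 T2 /\ ~ sys_normeq T1 T2) /\
  (exists (LV LE : finType) (T1 T2 : seq (rule LV LE)),
     gts T1 /\ gts T2 /\ sys_semeq T1 T2 /\ ~ sys_stepeq T1 T2).
Proof.
split.
  move=> LV LE T1 T2 g1 g2; split; first exact: sys_iso_normeq.
  by split; [exact: sys_normeq_stepeq | exact: sys_stepeq_semeq].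
have [T1 [T2 [? ? ? ?]]] := normeq_not_iso.
have [T3 [T4 [? ? ? ?]]] := stepeq_not_normeq.
have [T5 [T6 [? ? ? ?]]] := semeq_not_stepeq.
by split; [|split]; [exists unit, unit, T1, T2 | exists unit, unit, T3, T4
  | exists unit, unit, T5, T6].
Qed.
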